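(* Let $\mathbf{X}$ be a Banach space, $\mathcal{S}\subset\mathbf{X}$, and let $\mathbb{P}$ be a Borel probability measure on $\mathcal{S}$ of logarithmic growth order $s_0\ge0$ with respect to $\mathbf{X}$. Let $s>s_0$ and let $c=c(s)>0$, $\varepsilon_0=\varepsilon_0(s)>0$ be such that $\mathbb{P}(\mathcal{S}\cap\mathcal{B}(\mathbf{x},\varepsilon;\mathbf{X}))\le2^{-c\varepsilon^{-1/s}}$ for all $\mathbf{x}\in\mathbf{X}$, $\varepsilon\in(0,\varepsilon_0)$. Then for any $R\in\mathbb{N}$ and any encoder/decoder pair $(E_R,D_R)$ of code-length $R$, \[\mathbb{P}^\ast(\{\mathbf{x}\in\mathcal{S}:\|\mathbf{x}-D_R(E_R(\mathbf{x}))\|_{\mathbf{X}}\le\varepsilon\})\le2^{R-c\varepsilon^{-1/s}}\qquad\forall\varepsilon\in(0,\varepsilon_0).\] Furthermore, for any $s>s_0$ and $K>0$ there exists $R_0=R_0(s,s_0,K,\mathbb{P},\mathcal{S},\mathbf{X})\in\mathbb{N}$ such that for every codec $\mathcal{C}=((E_R,D_R))_{R\in\mathbb{N}}$, \[\mathbb{P}^\ast(\{\mathbf{x}\in\mathcal{S}:\|\mathbf{x}-D_R(E_R(\mathbf{x}))\|_{\mathbf{X}}\le K\cdot R^{-s}\})\le2^{-R}\qquad\forall R\ge R_0.\]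
   Context: Let $(\mathbf{X},\|\cdot\|_{\mathbf{X}})$ be a real Banach space and $\mathcal{S}\subset\mathbf{X}$. An encoder/decoder pair of code-length $R$ is a pair of maps $E_R:\mathcal{S}\to\{0,1\}^R$, $D_R:\{0,1\}^R\to\mathbf{X}$; a codec is a sequence $((E_R,D_R))_{R\in\mathbb{N}}$ of such pairs. $\mathcal{S}$ carries the trace $\sigma$-algebra of the Borel $\sigma$-algebra of $\mathbf{X}$; $\mathbb{P}^\ast(M)=\inf\{\sum_n\mathbb{P}(M_n):M_n\text{ measurable},M\subset\bigcup_nM_n\}$ is the outer measure. $\mathcal{B}(\mathbf{x},\varepsilon;\mathbf{X})$ is the closed ball. $\mathbb{P}$ has (logarithmic) growth order $s_0\in[0,\infty)$ w.r.t. $\mathbf{X}$ if for every $s>s_0$ there exist $\varepsilon_0,c>0$ with $\mathbb{P}(\mathcal{S}\cap\mathcal{B}(\mathbf{x},\varepsilon;\mathbf{X}))\le2^{-c\varepsilon^{-1/s}}$ for all $\mathbf{x}\in\mathbf{X}$, $\varepsilon\in(0,\varepsilon_0)$. *)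

From HB Require Import structures.
From mathcomp Require Import all_boot all_order all_algebra.
From mathcomp Require Import all_classical all_reals all_analysis.
Set Implicit Arguments. Unset Strict Implicit. Unset Printing Implicit Defensive.
Import Order.TTheory GRing.Theory Num.Theory.
Import numFieldNormedType.Exports.
Local Open Scope classical_set_scope.
Local Open Scope ring_scope.

Definition borel_set (R : realType) (X : normedModType R) : set (set X) :=
  <<s [set O : set X | open O] >>.

Definition cball (R : realType) (X : normedModType R) (x : X) (eps : R) : set X :=
  [set y | `|y - x| <= eps].

(* [T] with [emb : T -> X] is a faithful copy of the subset S of X equipped
   with the trace sigma-algebra of the Borel sigma-algebra of X. *)
Definition trace_borel_copy (R : realType) (X : normedModType R) (S : set X)
    (d : measure_display) (T : measurableType d) (emb : T -> X) : Prop :=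
  injective emb /\ range emb = S /\
  (forall A : set T, measurable A <-> exists2 B, borel_set B & A = emb @^-1` B).

(* P has logarithmic growth order s0 w.r.t. X (P being a measure on the copy
   T of S, so that P(S ∩ B(x,eps;X)) is P (emb @^-1` B(x,eps;X))). *)
Definition growth_order (R : realType) (X : normedModType R)
    (d : measure_display) (T : measurableType d) (emb : T -> X)
    (P : set T -> \bar R) (s0 : R) : Prop :=
  0 <= s0 /\
  forall s, s0 < s -> exists eps0 c : R, 0 < eps0 /\ 0 < c /\
    forall (x : X) (eps : R), 0 < eps -> eps < eps0 ->
      (P (emb @^-1` cball x eps) <= (powR 2 (- (c * powR eps (- s^-1))))%:E)%E.

Definition codeword (n : nat) := n.-tuple bool.

From HB Require Import structures.
From mathcomp Require Import all_boot all_order all_algebra.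
From mathcomp Require Import all_classical all_reals all_analysis.
From mathcomp Require Import lra.
Import Order.TTheory GRing.Theory Num.Theory.
Import numFieldNormedType.Exports.
Local Open Scope classical_set_scope.
Local Open Scope ring_scope.

(* A code of length n has only 2^n codewords, so the points that a codec
   reproduces within eps are covered by 2^n closed eps-balls, each of mass at
   most 2^(-c eps^(-1/s)); finite subadditivity of the outer measure gives the
   first bound.  For the second, apply the first with an exponent s' strictly
   between s0 and s and with eps = K n^(-s): then c eps^(-1/s') is a constant
   times n^(s/s'), which grows superlinearly and so eventually exceeds 2n. *)

Lemma cball_closed (R : realType) (X : normedModType R) (x : X) (eps : R) :
  closed (cball x eps).
Proof.
have -> : cball x eps = (fun y => `|y - x|) @^-1` [set r | r <= eps] by [].
have dist_cont : continuous (fun y : X => `|y - x|).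
  move=> y; apply: (@continuous_comp _ _ _ (fun y => y - x) Num.norm).
    exact: (cvgB cvg_id (cvg_cst _)).
  exact: norm_continuous.
by move/continuous_closedP: dist_cont; apply; exact: closed_le.
Qed.

Lemma measurable_cball_preimage {R : realType} {X : normedModType R} {S : set X}
    {d : measure_display} {T : measurableType d} {emb : T -> X} (x : X) (eps : R) :
  trace_borel_copy S emb -> measurable (emb @^-1` cball x eps).
Proof.
case=> _ [_ trace]; apply/trace; exists (cball x eps) => //.
rewrite -[cball x eps]setCK; apply: sigma_algebraC; apply: sub_sigma_algebra.
exact/closed_openC/cball_closed.
Qed.

Lemma outer_measure_bigsetU_le {T : Type} {R : realType}
    (mu : {outer_measure set T -> \bar R}) {I : Type} (s : seq I) (F : I -> set T) :
  (mu (\big[setU/set0]_(i <- s) F i) <= \sum_(i <- s) mu (F i))%E.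
Proof.
elim/big_ind2: _ => [|x A y B muA muB|//]; first by rewrite outer_measure0.
exact: le_trans (outer_measureU2 mu A B) (leeD muA muB).
Qed.

Lemma mu_ext_le_fincover {d} {T : semiRingOfSetsType d} {R : realType}
    (mu : {measure set T -> \bar R}) {I : finType} (F : I -> set T) (A : set T) (b : R) :
  (forall i, measurable (F i)) -> (forall i, (mu (F i) <= b%:E)%E) ->
  A `<=` \bigcup_i F i -> (mu_ext mu A <= (#|I|%:R * b)%:E)%E.
Proof.
move=> mF Fb AF; apply: le_trans (le_mu_ext mu AF) _.
have -> : \bigcup_i F i = \big[setU/set0]_(i <- enum I) F i.
  by rewrite -bigcup_seq; apply: eq_bigcupl; split=> i //= _; rewrite mem_enum.
apply: le_trans (outer_measure_bigsetU_le (mu_ext mu) _ _) _.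
rewrite mulr_natl -sumr_const -sumEFin big_enum; apply: lee_sum => i _.
by apply: le_trans (Fb i); rewrite -(measurable_mu_extE mu (mF i)).
Qed.

Lemma mu_ext_codec_success_le {d} {T : semiRingOfSetsType d} {R : realType}
    {X : normedModType R} {mu : {measure set T -> \bar R}} {emb : T -> X} {n : nat}
    (E : T -> codeword n) (D : codeword n -> X) (eps b : R) :
  (forall x, measurable (emb @^-1` cball x eps)) ->
  (forall x, (mu (emb @^-1` cball x eps) <= b%:E)%E) ->
  (mu_ext mu [set t | (`|emb t - D (E t)| <= eps)%R] <= (2 ^+ n * b)%:E)%E.
Proof.
move=> mB Bb.
have -> : 2 ^+ n = #|{: codeword n}|%:R :> R by rewrite card_tuple card_bool natrX.
apply: (@mu_ext_le_fincover _ _ _ mu _ (fun w => emb @^-1` cball (D w) eps)) => //.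
by move=> t close; exists (E t) => //; rewrite /cball /= distrC.
Qed.

Lemma exprn_mulr_powRN (R : realType) (a y : R) (n : nat) : 0 < a ->
  a ^+ n * a `^ (- y) = a `^ (n%:R - y).
Proof.
move=> a_gt0; rewrite -powR_mulrn ?ltW // -powRD //.
by apply/implyP => _; exact: lt0r_neq0.
Qed.

Lemma natr_powR_gt_eventually (R : realType) (M a : R) : 0 < a ->
  \forall n \near \oo, M < n%:R `^ a.
Proof.
move=> a_gt0; exists (Num.truncn (`|M| `^ a^-1)).+1 => // n /= Nn.
have root_lt : `|M| `^ a^-1 < n%:R.
  by apply: lt_le_trans (truncnS_gt _) _; rewrite ler_nat.
apply: le_lt_trans (ler_norm M) _.
have -> : `|M| = (`|M| `^ a^-1) `^ a.
  by rewrite -powRrM mulVf ?lt0r_neq0 // powRr1.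
by apply: gt0_ltr_powR; rewrite // nnegrE ?powR_ge0 // ler0n.
Qed.

Lemma natr_linear_le_powR_eventually (R : realType) (C b : R) : 0 < C -> 1 < b ->
  \forall n \near \oo, 2 * n%:R <= C * n%:R `^ b.
Proof.
move=> C_gt0 b_gt1; near=> n.
have n_gt0 : 0 < n%:R :> R by near: n; exists 1%N => // n; rewrite /= ltr0n.
have : 2 / C < n%:R `^ (b - 1) by near: n; apply: natr_powR_gt_eventually; lra.
have -> : n%:R `^ b = n%:R `^ (b - 1) * n%:R.
  by rewrite powRB ?gt_eqF ?implybT // powRr1 ?ltW // divfK ?gt_eqF.
rewrite ltr_pdivrMr // mulrA ler_pM2r // mulrC; exact: ltW.
Unshelve. all: by end_near.
Qed.

Lemma mu_ext_codec_success_eventually_le {d} {T : semiRingOfSetsType d}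
    {R : realType} {X : normedModType R} {mu : {measure set T -> \bar R}}
    {emb : T -> X} {s' s c eps0 K : R} :
  0 < s' -> s' < s -> 0 < c -> 0 < eps0 -> 0 < K ->
  (forall x eps, measurable (emb @^-1` cball x eps)) ->
  (forall x eps, 0 < eps -> eps < eps0 ->
     (mu (emb @^-1` cball x eps) <= (2 `^ (- (c * eps `^ (- s'^-1))))%:E)%E) ->
  \forall n \near \oo, forall (E : T -> codeword n) (D : codeword n -> X),
    (mu_ext mu [set t | (`|emb t - D (E t)| <= K * n%:R `^ (- s))%R]
       <= (2 `^ (- n%:R))%:E)%E.
Proof.
move=> s'_gt0 s's c_gt0 eps0_gt0 K_gt0 mB ball_bound; near=> n => E D.
have n_gt0 : 0 < n%:R :> R by near: n; exists 1%N => // n; rewrite /= ltr0n.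
set eps := K * n%:R `^ (- s).
have eps_gt0 : 0 < eps by rewrite mulr_gt0 // powR_gt0.
have eps_lt : eps < eps0.
  have : K / eps0 < n%:R `^ s by near: n; apply: natr_powR_gt_eventually; lra.
  by rewrite /eps powRN ltr_pdivrMr // ltr_pdivrMr ?powR_gt0 // mulrC.
apply: le_trans (mu_ext_codec_success_le E D eps _ (mB^~ eps)
  (fun x => ball_bound x eps eps_gt0 eps_lt)) _.
rewrite exprn_mulr_powRN // lee_fin ler_powR ?ler1n //.
have -> : eps `^ (- s'^-1) = K `^ (- s'^-1) * n%:R `^ (s / s').
  by rewrite powRM ?ltW ?powR_gt0 // -powRrM mulrNN.
have : 2 * n%:R <= c * K `^ (- s'^-1) * n%:R `^ (s / s').
  near: n; apply: natr_linear_le_powR_eventually.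
    by rewrite mulr_gt0 ?powR_gt0.
  by rewrite ltr_pdivlMr // mul1r.
rewrite mulrA; move: (c * _ * _) => p; lra.
Unshelve. all: by end_near.
Qed.

Theorem lemma2p3 (R : realType) (X : completeNormedModType R) (S : set X)
    (d : measure_display) (T : measurableType d) (emb : T -> X)
    (P : probability T R) (s0 : R) :
  trace_borel_copy S emb ->
  growth_order emb P s0 ->
  (forall s c eps0 : R, s0 < s -> 0 < c -> 0 < eps0 ->
     (forall (x : X) (eps : R), 0 < eps -> eps < eps0 ->
        (P (emb @^-1` cball x eps) <= (powR 2 (- (c * powR eps (- s^-1))))%:E)%E) ->
     forall (n : nat) (E : T -> codeword n) (D : codeword n -> X) (eps : R),
       0 < eps -> eps < eps0 ->
       (mu_ext P [set t : T | (`|emb t - D (E t)| <= eps)%R]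
          <= (powR 2 (n%:R - c * powR eps (- s^-1)))%:E)%E) /\
  (forall s K : R, s0 < s -> 0 < K ->
     exists R0 : nat,
       forall (E : forall n : nat, T -> codeword n)
              (D : forall n : nat, codeword n -> X) (n : nat),
         (R0 <= n)%N ->
         (mu_ext P [set t : T | (`|emb t - D n (E n t)| <= K * powR n%:R (- s))%R]
            <= (powR 2 (- n%:R))%:E)%E).
Proof.
move=> trace [s0_ge0 growth]; have mB x eps := measurable_cball_preimage x eps trace.
split=> [s c eps0 _ _ _ ball_bound n E D eps eps_gt0 eps_lt | s K s0s K_gt0].
  rewrite -exprn_mulr_powRN //; apply: mu_ext_codec_success_le => // x.
  exact: ball_bound.
pose s' := (s0 + s) / 2.
have s'_gt0 : 0 < s' by rewrite /s'; lra.
have s0s' : s0 < s' by rewrite /s'; lra.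
have s's : s' < s by rewrite /s'; lra.
have [eps0 [c [eps0_gt0 [c_gt0 ball_bound]]]] := growth s' s0s'.
have [R0 _ rate] :=
  mu_ext_codec_success_eventually_le s'_gt0 s's c_gt0 eps0_gt0 K_gt0 mB ball_bound.
by exists R0 => E D n /rate; apply.
Qed.
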